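(* Let $H$ be a real $d\times d$ matrix partitioned into blocks $(H_{ij})_{1\le i,j\le n}$ with $H_{ij}\in\mathbb{R}^{d_i\times d_j}$, $\sum_i d_i=d$. Let $S=(H+H^\top)/2$ be its symmetric part and $H_d=\bigoplus_i H_{ii}$ the block-diagonal matrix formed by its diagonal blocks. For a square matrix $A$ write $\lambda(A)=\mathrm{Re}(\mathrm{Spec}(A))$ for the set of real parts of its eigenvalues. Then the following implications hold: (1) $H\prec 0\Rightarrow \max\lambda(H)<0$; (2) $H\prec 0\Rightarrow \max\lambda(H_d)<0$; (3) $\max\lambda(H)<0\Rightarrow\min\lambda(H)<0$; (4) $\max\lambda(H_d)<0\Rightarrow\min\lambda(H_d)<0$; (5) $\max\lambda(H)<0\Rightarrow \min\lambda(H_d)<0$; (6) $\max\lambda(H_d)<0\Rightarrow\min\lambda(H)<0$; (7) $\min\lambda(H)<0\Rightarrow\min\lambda(S)<0$; (8) $\min\lambda(H_d)<0\Rightarrow\min\lambda(S)<0$. Moreover, none of these implications is an equivalence: for each of them there exists such a partitioned matrix $H$ for which the conclusion holds but the hypothesis fails.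
   Context: For a (not necessarily symmetric) real square matrix $H$, $H\prec 0$ means $u^\top H u<0$ for all nonzero $u$ (equivalently, the symmetric part of $H$ is negative definite). *)

(* real matrices over an arbitrary real closed field R,
   eigenvalues taken in the algebraic closure R[i] (mathcomp-real-closed). *)
From HB Require Import structures.
From mathcomp Require Import all_boot all_order all_algebra.
From mathcomp Require Import complex.
Set Implicit Arguments. Unset Strict Implicit. Unset Printing Implicit Defensive.
Import Order.TTheory GRing.Theory Num.Theory.
Local Open Scope ring_scope.

Definition cplx_mx (R : rcfType) (m : nat) (A : 'M[R]_m) : 'M[R[i]]_m :=
  map_mx (fun x : R => x%:C%C) A.

Definition spec (R : rcfType) (m : nat) (A : 'M[R]_m) : pred R[i] :=
  fun z => eigenvalue (cplx_mx A) z.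

Definition lam (R : rcfType) (m : nat) (A : 'M[R]_m) : R -> Prop :=
  fun r => exists2 z : R[i], spec A z & complex.Re z = r.

(* max lambda(A) < 0  : every element of lambda(A) is negative
   (lambda(A) is finite and, for m >= 1, nonempty, so this is exactly max < 0) *)
Definition max_lam_neg (R : rcfType) (m : nat) (A : 'M[R]_m) : Prop :=
  forall r, lam A r -> r < 0.

Definition min_lam_neg (R : rcfType) (m : nat) (A : 'M[R]_m) : Prop :=
  exists2 r, lam A r & r < 0.

Definition negdef (R : rcfType) (m : nat) (H : 'M[R]_m) : Prop :=
  forall u : 'cV[R]_m, u != 0 -> (u^T *m H *m u) 0 0 < 0.

Definition sympart (R : rcfType) (m : nat) (H : 'M[R]_m) : 'M[R]_m :=
  2^-1 *: (H + H^T).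

Definition blkdiag (R : rcfType) (n : nat) (ds : 'I_n -> nat)
  (H : 'M[R]_(\sum_(i < n) ds i)) : 'M[R]_(\sum_(i < n) ds i) :=
  \mxdiag_(i < n) submxblock H i i.

(* The whole argument runs through quadratic forms.  If [v A = z v] with
   [v = x + i y], then [Re z (|x|^2 + |y|^2) = x A x^T + y A y^T]; so a
   negative definite [A] has eigenvalues in the open left half plane, and an
   eigenvalue with negative real part produces a vector on which the quadratic
   form of [A], which is that of its symmetric part [S], is negative, whence
   (spectral theorem) [S] has a negative eigenvalue.  The quadratic form of [H_d]
   is the sum of the forms of [H] on the block restrictions of the vector, which
   gives [H < 0 -> H_d < 0] and (8).  Items (3)-(6) go through the trace, the
   sum of the eigenvalues: it is negative when [max lambda < 0] and forces
   [min lambda < 0] when negative, and [tr H = tr H_d].  All counterexamples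
   are 2 x 2 lower triangular matrices with 1 x 1 blocks: their eigenvalues are
   the diagonal entries, while the entry below the diagonal changes the
   quadratic form. *)

From mathcomp Require Import all_boot all_order all_algebra.
From mathcomp Require Import complex ring lra.
Import Order.TTheory GRing.Theory Num.Theory tagnat.
Set Implicit Arguments. Unset Strict Implicit. Unset Printing Implicit Defensive.
Local Open Scope ring_scope.

Lemma sumr_lt0_exists (R : realDomainType) (I : eqType) (r : seq I) (F : I -> R) :
  \sum_(i <- r) F i < 0 -> exists2 i, i \in r & F i < 0.
Proof.
elim: r => [|a r IHr]; first by rewrite big_nil ltxx.
rewrite big_cons; have [Fa_lt0 _|Fa_ge0 lt0] := ltrP (F a) 0.
  by exists a; rewrite ?mem_head.
have [|i ri Fi_lt0] := IHr; first lra.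
by exists i; rewrite ?inE ?ri ?orbT.
Qed.

Lemma eigenvalue_trigP (F : fieldType) n (T : 'M[F]_n) a :
  is_trig_mx T -> reflect (exists k, a = T k k) (eigenvalue T a).
Proof.
move=> T_trig; rewrite eigenvalue_root_char char_poly_trig // /root horner_prod.
apply: (iffP (@prodf_eq0 _ _ xpredT _)) => [[k _]|[k ->]].
  by rewrite !hornerE subr_eq0 => /eqP ->; exists k.
by exists k; rewrite ?hornerE ?subrr.
Qed.

Lemma eigenvalue_conj_diag (F : fieldType) n (P : 'M[F]_n) (d : 'rV[F]_n) k :
  P \in unitmx -> eigenvalue (invmx P *m diag_mx d *m P) (d 0 k).
Proof.
move=> P_unit; apply/eigenvalueP; exists (row k P).
  by rewrite !mulmxA -!row_mul mulmxV // mul1mx row_mul row_diag_mx -scalemxAl -rowE.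
apply: contraTneq isT => Pk0; have := congr1 (mulmx^~ (invmx P)) Pk0.
rewrite rowE mulmxK // mul0mx => /rowP/(_ k); rewrite !mxE !eqxx /=.
by move/eqP; rewrite oner_eq0.
Qed.

Lemma mxtrace_sum_eigenvalues (F : closedFieldType) n (A : 'M[F]_n) :
  (0 < n)%N ->
  exists rs : seq F, [/\ size rs = n, all (eigenvalue A) rs & \tr A = \sum_(z <- rs) z].
Proof.
move=> n_gt0; have [rs chiE] := closed_field_poly_normal (char_poly A).
rewrite (monicP (char_poly_monic A)) scale1r in chiE.
have size_rs : size rs = n.
  by apply: succn_inj; rewrite -(size_char_poly A) chiE size_prod_XsubC.
exists rs; split => //.
  by apply/allP => z z_rs; rewrite eigenvalue_root_char chiE root_prod_XsubC.
apply: oppr_inj; rewrite -char_poly_trace // chiE -size_rs coefPn_prod_XsubC //.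
by rewrite size_rs -lt0n.
Qed.

Section RealSpectrum.
Variables (R : rcfType) (m : nat).
Hypothesis m_gt0 : (0 < m)%N.
Implicit Type A : 'M[R]_m.

Lemma mxtrace_Re_spec A :
  exists rs : seq R[i],
    [/\ size rs = m, all (spec A) rs & \tr A = \sum_(z <- rs) complex.Re z].
Proof.
have [rs [size_rs rs_spec trE]] := mxtrace_sum_eigenvalues (cplx_mx A) m_gt0.
exists rs; split => //; rewrite -raddf_sum -trE /mxtrace raddf_sum /=.
by apply: eq_bigr => k _; rewrite mxE.
Qed.

Lemma max_lam_neg_mxtrace_lt0 A : max_lam_neg A -> \tr A < 0.
Proof.
move=> A_neg; have [rs [size_rs rs_spec ->]] := mxtrace_Re_spec A.
have := m_gt0; rewrite -size_rs.
case: rs {size_rs} rs_spec => [|z rs] //= /andP[Az Ars] _.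
have Rez_lt0 : complex.Re z < 0 by apply: A_neg; exists z.
have : \sum_(w <- rs) complex.Re w <= 0.
  by rewrite big_seq sumr_le0 // => w /(allP Ars) Aw; apply/ltW/A_neg; exists w.
by rewrite big_cons; lra.
Qed.

Lemma mxtrace_lt0_min_lam_neg A : \tr A < 0 -> min_lam_neg A.
Proof.
have [rs [_ rs_spec ->]] := mxtrace_Re_spec A.
by case/sumr_lt0_exists => z /(allP rs_spec) Az Rez_lt0; exists (complex.Re z) => //; exists z.
Qed.

End RealSpectrum.

Section QuadraticForm.
Variables (R : rcfType) (m : nat).
Implicit Types (A B S : 'M[R]_m) (x y : 'rV[R]_m) (v w : 'rV[R[i]]_m).

Definition qform A x : R := (x *m A *m x^T) 0 0.

Lemma qformE A x : qform A x = \sum_k \sum_l x 0 k * A k l * x 0 l.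
Proof.
rewrite /qform mxE; under eq_bigr do rewrite mxE mulr_suml.
rewrite exchange_big; apply: eq_bigr => k _; apply: eq_bigr => l _.
by rewrite !mxE.
Qed.

Lemma qformx0 A : qform A 0 = 0.
Proof. by rewrite qformE big1 // => k _; rewrite big1 // => l _; rewrite !mxE !mul0r. Qed.

Lemma qformD A B x : qform (A + B) x = qform A x + qform B x.
Proof. by rewrite /qform mulmxDr mulmxDl mxE. Qed.

Lemma qformZ a A x : qform (a *: A) x = a * qform A x.
Proof. by rewrite /qform -scalemxAr -scalemxAl mxE. Qed.

Lemma qform_tr A x : qform A^T x = qform A x.
Proof.
rewrite /qform -[in RHS](trmxK (x *m A *m x^T)) [in RHS]mxE.
by rewrite !trmx_mul trmxK mulmxA.
Qed.

Lemma sympart_tr A : (sympart A)^T = sympart A.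
Proof. by rewrite /sympart linearZ /= linearD /= trmxK addrC. Qed.

Lemma qform_sympart A x : qform (sympart A) x = qform A x.
Proof. rewrite /sympart qformZ qformD qform_tr; lra. Qed.

Lemma qform1E x : qform 1%:M x = \sum_k x 0 k ^+ 2.
Proof.
rewrite qformE; apply: eq_bigr => k _.
rewrite (bigD1 k) //= big1 => [|l /negPf lk]; last by rewrite !mxE eq_sym lk mulr0 mul0r.
by rewrite mxE eqxx mulr1 addr0.
Qed.

Lemma qform1_ge0 x : 0 <= qform 1%:M x.
Proof. by rewrite qform1E sumr_ge0 // => k _; rewrite sqr_ge0. Qed.

Lemma qform1_gt0 x : x != 0 -> 0 < qform 1%:M x.
Proof.
move=> x_neq0; rewrite lt_def qform1_ge0 andbT qform1E.
rewrite psumr_eq0 => [|k _]; last exact: sqr_ge0.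
apply: contra x_neq0 => /allP x0; apply/eqP/rowP => k; rewrite mxE.
by have := x0 k (mem_index_enum k); rewrite sqrf_eq0 => /eqP.
Qed.

Lemma qform1D_gt0 x y : (x != 0) || (y != 0) -> 0 < qform 1%:M x + qform 1%:M y.
Proof.
move=> xy_neq0; have := qform1_ge0 x; have := qform1_ge0 y.
by case/orP: xy_neq0 => [/qform1_gt0 | /qform1_gt0]; lra.
Qed.

Lemma qform_negdef A : (forall x, x != 0 -> qform A x < 0) -> negdef A.
Proof. by move=> A_neg u u_neq0; have := A_neg u^T; rewrite /qform trmxK trmx_eq0; apply. Qed.

Lemma negdef_qform_lt0 A x : negdef A -> x != 0 -> qform A x < 0.
Proof. by move=> A_neg x_neq0; have := A_neg x^T; rewrite trmxK trmx_eq0; apply. Qed.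

Lemma negdef_qform_le0 A x : negdef A -> qform A x <= 0.
Proof.
move=> A_neg; have [->|x_neq0] := eqVneq x 0; first by rewrite qformx0.
exact/ltW/negdef_qform_lt0.
Qed.

Lemma negdef_qformD_lt0 A x y :
  negdef A -> (x != 0) || (y != 0) -> qform A x + qform A y < 0.
Proof.
move=> A_neg xy_neq0.
have := negdef_qform_le0 x A_neg; have := negdef_qform_le0 y A_neg.
by case/orP: xy_neq0 => [/(negdef_qform_lt0 A_neg) | /(negdef_qform_lt0 A_neg)]; lra.
Qed.

Local Open Scope sesquilinear_scope.
Local Notation Re := (@complex.Re R).
Local Notation Im := (@complex.Im R).

Lemma Re_cplx_qform A v :
  Re ((v *m cplx_mx A *m v ^t*) 0 0) = qform A (map_mx Re v) + qform A (map_mx Im v).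
Proof.
rewrite !qformE -big_split /=; under eq_bigr do rewrite -big_split /=.
rewrite exchange_big mxE raddf_sum; apply: eq_bigr => l _ /=.
rewrite mxE mulr_suml raddf_sum; apply: eq_bigr => k _ /=.
rewrite !mxE; case: (v 0 k) => a b; case: (v 0 l) => c d /=; ring.
Qed.

Lemma cplx_dotmx_self v :
  (v *m v ^t*) 0 0 = (qform 1%:M (map_mx Re v) + qform 1%:M (map_mx Im v))%:C%C.
Proof.
rewrite !qform1E -big_split rmorph_sum mxE; apply: eq_bigr => k _ /=.
rewrite !mxE; case: (v 0 k) => a b; apply/eqP; rewrite eq_complex /=.
by apply/andP; split; apply/eqP; ring.
Qed.

Lemma eigenvalue_Re_qform A z : spec A z ->
  exists x y, (x != 0) || (y != 0) /\
    Re z * (qform 1%:M x + qform 1%:M y) = qform A x + qform A y.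
Proof.
move=> /eigenvalueP [v vA v_neq0]; exists (map_mx Re v), (map_mx Im v); split.
  apply: contraNT v_neq0; rewrite negb_or !negbK => /andP[/eqP Re_v0 /eqP Im_v0].
  apply/eqP/rowP => k; move/rowP/(_ k): Re_v0; move/rowP/(_ k): Im_v0.
  by rewrite !mxE; case: (v 0 k) => a b /= -> ->.
rewrite -[RHS]Re_cplx_qform vA -scalemxAl mxE cplx_dotmx_self.
by case: z {vA} => a b /=; ring.
Qed.

Lemma negdef_max_lam_neg A : negdef A -> max_lam_neg A.
Proof.
move=> A_neg _ [z /eigenvalue_Re_qform [x [y [xy_neq0 zE]]] <-].
by rewrite -(pmulr_llt0 _ (qform1D_gt0 xy_neq0)) zE negdef_qformD_lt0.
Qed.

Lemma min_lam_neg_qform_lt0 A : min_lam_neg A -> exists x, qform A x < 0.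
Proof.
move=> [_ [z /eigenvalue_Re_qform [x [y [xy_neq0 zE]]] <-] z_lt0].
have : qform A x + qform A y < 0 by rewrite -zE pmulr_llt0 // qform1D_gt0.
by case: (ltrP (qform A x) 0) => [|Ax_ge0] ? ; [exists x | exists y; lra].
Qed.

Lemma Re_diag_form_ge0 w (d : 'rV[R[i]]_m) :
  (forall k, 0 <= Re (d 0 k)) -> 0 <= Re ((w *m diag_mx d *m w ^t*) 0 0).
Proof.
move=> d_ge0; rewrite mxE raddf_sum; apply: sumr_ge0 => k _ /=.
rewrite mul_mx_diag !mxE; have := d_ge0 k.
case: (w 0 k) => a b; case: (d 0 k) => c e /= c_ge0.
by rewrite (_ : _ - _ = c * (a ^+ 2 + b ^+ 2)) 1?mulr_ge0 ?addr_ge0 ?sqr_ge0 //; ring.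
Qed.

Lemma sym_qform_lt0_min_lam_neg S x : S^T = S -> qform S x < 0 -> min_lam_neg S.
Proof.
move=> S_sym Sx_lt0.
have Sc_herm : cplx_mx S \is hermsymmx.
  apply/is_hermitianmxP/matrixP => i j; rewrite !mxE expr0 mul1r.
  by rewrite -{2}S_sym mxE; apply/eqP; rewrite eq_complex /= oppr0 !eqxx.
have /orthomx_spectralP ScE := hermitian_normalmx Sc_herm.
set P := spectralmx _ in ScE; set d := spectral_diag _ in ScE.
have P_unitary : P \is unitarymx by exact: spectral_unitarymx.
have [k dk_lt0 | d_ge0] := pickP (fun k => Re (d 0 k) < 0).
  exists (Re (d 0 k)) => //; exists (d 0 k) => //.
  by rewrite /spec ScE eigenvalue_conj_diag // unitarymx_unit.
pose v := map_mx (fun r => r%:C%C) x.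
have Sx_Re : qform S x = Re ((v *m cplx_mx S *m v ^t*) 0 0).
  rewrite Re_cplx_qform (_ : map_mx Im v = 0) ?qformx0 ?addr0.
    by congr qform; apply/rowP => k; rewrite !mxE.
  by apply/rowP => k; rewrite !mxE.
suff : 0 <= qform S x by rewrite leNgt Sx_lt0.
rewrite Sx_Re ScE invmx_unitary //.
have -> : v *m (P ^t* *m diag_mx d *m P) *m v ^t* =
          (v *m P ^t*) *m diag_mx d *m (v *m P ^t*) ^t*.
  by rewrite trmx_mul map_mxM trmxCK !mulmxA.
by apply: Re_diag_form_ge0 => j; rewrite leNgt; apply: negbT (d_ge0 j).
Qed.

Lemma qform_lt0_min_lam_neg_sympart A x : qform A x < 0 -> min_lam_neg (sympart A).
Proof.
move=> Ax_lt0; apply: (@sym_qform_lt0_min_lam_neg _ x (sympart_tr A)).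
by rewrite qform_sympart.
Qed.

End QuadraticForm.

Section BlockDiagonal.
Variables (R : rcfType) (n : nat) (ds : 'I_n -> nat).
Local Notation d := (\sum_(i < n) ds i).
Implicit Types (H : 'M[R]_d) (x : 'rV[R]_d).

Lemma blkdiagE H k l : blkdiag H k l = if sig1 k == sig1 l then H k l else 0.
Proof.
rewrite /blkdiag /mxdiag mxE; case: eqP => [e|_]; last by rewrite mxE.
have -> : H k l = H (Rank (sig1 k) (sig2 k)) (Rank (sig1 l) (sig2 l)) by rewrite !sig2K.
move: (sig2 l); rewrite -e => y.
by rewrite conform_mx_id /submxblock mxE.
Qed.

Lemma mxtrace_blkdiag H : \tr (blkdiag H) = \tr H.
Proof. by apply: eq_bigr => k _; rewrite blkdiagE eqxx. Qed.

Definition blk_restrict x (i : 'I_n) : 'rV[R]_d :=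
  \row_k (if sig1 k == i then x 0 k else 0).

Lemma blk_restrict_neq0 x k : x 0 k != 0 -> blk_restrict x (sig1 k) != 0.
Proof. by move=> xk_neq0; apply: contra_neq xk_neq0 => /rowP/(_ k); rewrite !mxE eqxx. Qed.

Lemma qform_blkdiag H x : qform (blkdiag H) x = \sum_i qform H (blk_restrict x i).
Proof.
under [RHS]eq_bigr do rewrite qformE.
rewrite qformE [RHS]exchange_big; apply: eq_bigr => k _.
rewrite [RHS]exchange_big; apply: eq_bigr => l _.
rewrite [RHS](bigD1 (sig1 k)) //= [X in _ + X]big1 ?addr0 => [|i /negPf ki]; last first.
  by rewrite !mxE eq_sym ki !mul0r.
rewrite blkdiagE !mxE eqxx eq_sym.
by case: eqP => _; rewrite ?mulr0 ?mul0r.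
Qed.

Lemma negdef_blkdiag H : negdef H -> negdef (blkdiag H).
Proof.
move=> H_neg; apply: qform_negdef => x x_neq0.
have [k xk_neq0] : exists k, x 0 k != 0.
  apply/existsP; apply: contraNT x_neq0; rewrite negb_exists => /forallP x0.
  by apply/eqP/rowP => k; rewrite mxE; apply/eqP/negbNE.
rewrite qform_blkdiag (bigD1 (sig1 k)) //=.
have := negdef_qform_lt0 H_neg (blk_restrict_neq0 xk_neq0).
have : \sum_(i | i != sig1 k) qform H (blk_restrict x i) <= 0.
  by apply: sumr_le0 => i _; apply: negdef_qform_le0.
lra.
Qed.

Lemma min_lam_neg_blkdiag_sympart H :
  min_lam_neg (blkdiag H) -> min_lam_neg (sympart H).
Proof.
case/min_lam_neg_qform_lt0 => x; rewrite qform_blkdiag.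
by case/sumr_lt0_exists => i _; apply: qform_lt0_min_lam_neg_sympart.
Qed.

End BlockDiagonal.

Section Counterexamples.
Variable R : rcfType.

Definition ltri_mx m (a b c : R) : 'M[R]_m :=
  \matrix_(k, l) if k == l then (if k == 0 :> nat then a else b)
                 else if (l < k)%N then c else 0.

Lemma ltri_mx_trig m a b c : is_trig_mx (cplx_mx (ltri_mx m a b c)).
Proof.
apply/is_trig_mxP => k l lt_kl; rewrite !mxE -val_eqE /= ltn_eqF //.
by rewrite ltnNge ltnW.
Qed.

Lemma lam_ltri_mx m a b c r : (1 < m)%N -> lam (ltri_mx m a b c) r <-> r = a \/ r = b.
Proof.
move=> m_gt1; have trig := ltri_mx_trig m a b c; split.
  case=> z /(eigenvalue_trigP _ trig) [k ->] <-; rewrite !mxE eqxx.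
  by case: ifP; [left | right].
case=> ->; [exists a%:C%C | exists b%:C%C] => //; apply/(eigenvalue_trigP _ trig).
  by exists (Ordinal (ltnW m_gt1)); rewrite !mxE eqxx.
by exists (Ordinal m_gt1); rewrite !mxE eqxx.
Qed.

Lemma max_lam_neg_ltri_mx m a b c :
  (1 < m)%N -> max_lam_neg (ltri_mx m a b c) <-> a < 0 /\ b < 0.
Proof.
move=> m_gt1; split => [A_neg | [a_lt0 b_lt0] r /(lam_ltri_mx _ _ _ _ m_gt1) [] -> //].
by split; apply: A_neg; apply/lam_ltri_mx => //; [left | right].
Qed.

Lemma min_lam_neg_ltri_mx m a b c :
  (1 < m)%N -> min_lam_neg (ltri_mx m a b c) <-> a < 0 \/ b < 0.
Proof.
move=> m_gt1; split.
  by case=> r /(lam_ltri_mx _ _ _ _ m_gt1) [] -> r_lt0; [left | right].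
by case=> [a_lt0 | b_lt0]; [exists a | exists b]; rewrite // lam_ltri_mx; auto.
Qed.

Lemma card_unit_blocks n : (\sum_(i < n) (fun _ => 1%N) i)%N = n.
Proof. by rewrite sum1_card card_ord. Qed.

Lemma blkdiag_ltri_mx n a b c :
  blkdiag (ltri_mx (\sum_(i < n) (fun _ => 1%N) i) a b c) = ltri_mx _ a b 0.
Proof.
apply/matrixP => k l; rewrite blkdiagE !mxE.
have -> : (sig1 k == sig1 l) = (k == l).
  apply/eqP/eqP => [e|->//]; rewrite -(sig2K k) -(sig2K l).
  by move: (sig2 k) (sig2 l); rewrite e => u w; rewrite (ord1 u) (ord1 w).
by case: (k == l); case: ifP.
Qed.

Lemma ltri_mx2_not_negdef : ~ negdef (ltri_mx 2 (-1) (-1) (4 : R)).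
Proof.
have ones_neq0 : const_mx 1 != 0 :> 'rV[R]_2.
  by apply/negP => /eqP/rowP/(_ 0); rewrite !mxE => /eqP; rewrite oner_eq0.
move/negdef_qform_lt0/(_ ones_neq0).
by rewrite qformE !big_ord_recr !big_ord0 /= !mxE /=; lra.
Qed.

Lemma ltri_mx2_qform_lt0 :
  qform (ltri_mx 2 1 1 (4 : R)) (\row_k (if k == 0 then 1 else -1)) < 0.
Proof. rewrite qformE !big_ord_recr !big_ord0 /= !mxE /=; lra. Qed.

End Counterexamples.

Theorem proposition2 (R : rcfType) :
  (forall (n : nat) (ds : 'I_n -> nat) (H : 'M[R]_(\sum_(i < n) ds i)),
     (0 < \sum_(i < n) ds i)%N ->
     (negdef H -> max_lam_neg H) /\
         (negdef H -> max_lam_neg (blkdiag H)) /\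
         (max_lam_neg H -> min_lam_neg H) /\
         (max_lam_neg (blkdiag H) -> min_lam_neg (blkdiag H)) /\
         (max_lam_neg H -> min_lam_neg (blkdiag H)) /\
         (max_lam_neg (blkdiag H) -> min_lam_neg H) /\
         (min_lam_neg H -> min_lam_neg (sympart H)) /\
         (min_lam_neg (blkdiag H) -> min_lam_neg (sympart H))) /\
  (exists (n : nat) (ds : 'I_n -> nat) (H : 'M[R]_(\sum_(i < n) ds i)),
        [/\ (0 < n)%N, (forall i, 0 < ds i)%N,
            max_lam_neg H & ~ negdef H]) /\
      (exists (n : nat) (ds : 'I_n -> nat) (H : 'M[R]_(\sum_(i < n) ds i)),
        [/\ (0 < n)%N, (forall i, 0 < ds i)%N,
            max_lam_neg (blkdiag H) & ~ negdef H]) /\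
      (exists (n : nat) (ds : 'I_n -> nat) (H : 'M[R]_(\sum_(i < n) ds i)),
        [/\ (0 < n)%N, (forall i, 0 < ds i)%N,
            min_lam_neg H & ~ max_lam_neg H]) /\
      (exists (n : nat) (ds : 'I_n -> nat) (H : 'M[R]_(\sum_(i < n) ds i)),
        [/\ (0 < n)%N, (forall i, 0 < ds i)%N,
            min_lam_neg (blkdiag H) & ~ max_lam_neg (blkdiag H)]) /\
      (exists (n : nat) (ds : 'I_n -> nat) (H : 'M[R]_(\sum_(i < n) ds i)),
        [/\ (0 < n)%N, (forall i, 0 < ds i)%N,
            min_lam_neg (blkdiag H) & ~ max_lam_neg H]) /\
      (exists (n : nat) (ds : 'I_n -> nat) (H : 'M[R]_(\sum_(i < n) ds i)),
        [/\ (0 < n)%N, (forall i, 0 < ds i)%N,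
            min_lam_neg H & ~ max_lam_neg (blkdiag H)]) /\
      (exists (n : nat) (ds : 'I_n -> nat) (H : 'M[R]_(\sum_(i < n) ds i)),
        [/\ (0 < n)%N, (forall i, 0 < ds i)%N,
            min_lam_neg (sympart H) & ~ min_lam_neg H]) /\
      (exists (n : nat) (ds : 'I_n -> nat) (H : 'M[R]_(\sum_(i < n) ds i)),
        [/\ (0 < n)%N, (forall i, 0 < ds i)%N,
            min_lam_neg (sympart H) & ~ min_lam_neg (blkdiag H)]).
Proof.
split.
  move=> n ds H d_gt0; have trH := mxtrace_blkdiag H.
  do !split.
  - exact: negdef_max_lam_neg.
  - by move/negdef_blkdiag/negdef_max_lam_neg.
  - by move/(max_lam_neg_mxtrace_lt0 d_gt0)/(mxtrace_lt0_min_lam_neg d_gt0).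
  - by move/(max_lam_neg_mxtrace_lt0 d_gt0)/(mxtrace_lt0_min_lam_neg d_gt0).
  - by move/(max_lam_neg_mxtrace_lt0 d_gt0); rewrite -trH => /(mxtrace_lt0_min_lam_neg d_gt0).
  - by move/(max_lam_neg_mxtrace_lt0 d_gt0); rewrite trH => /(mxtrace_lt0_min_lam_neg d_gt0).
  - by case/min_lam_neg_qform_lt0 => x /qform_lt0_min_lam_neg_sympart.
  - exact: min_lam_neg_blkdiag_sympart.
have two_gt1 : (1 < 2)%N by [].
do !split; exists 2%N, (fun _ => 1%N).
1-2: exists (ltri_mx _ (-1) (-1) 4); rewrite ?blkdiag_ltri_mx card_unit_blocks.
1-2: by split=> //; [apply/max_lam_neg_ltri_mx => //; lra | exact: ltri_mx2_not_negdef].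
1-4: exists (ltri_mx _ (-1) 1 0); rewrite ?blkdiag_ltri_mx card_unit_blocks.
1-4: by split=> //; rewrite ?min_lam_neg_ltri_mx ?max_lam_neg_ltri_mx //; lra.
all: exists (ltri_mx _ 1 1 4); rewrite ?blkdiag_ltri_mx card_unit_blocks.
all: split=> //; first exact/qform_lt0_min_lam_neg_sympart/ltri_mx2_qform_lt0.
all: by rewrite min_lam_neg_ltri_mx //; lra.
Qed.
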